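(* The Petersen graph is not B-factorizable; moreover, there is $v\in\overline{\mathbf N}(PM(V))\cap\mathrm{problem}(V)$ with $E(v)$ equal to the Petersen graph and $2v\in\mathbf N(PM(V))$, which is an additional generator.
   Context: Let $V$ be a finite set with $|V|$ even (here $|V|=10$, the vertex set of the Petersen graph). $K=\binom{V}{2}$ is the set of 2-element subsets of $V$. An equal partition of $V$ is an unordered pair $\{H,A\}$ of disjoint subsets with $H\cup A=V$ and $|H|=|A|=|V|/2$; $C=C(V)$ is the set of equal partitions. For $c=\{H,A\}\in C$, $B_c$ is the complete bipartite graph with parts $H$ and $A$. Vectors live in $\mathbb N^{K\cup C}$ with $\mathbb N=\{0,1,2,\dots\}$; $v|_K$ denotes the restriction to coordinates in $K$. For $E\subseteq K$, $\chi_E\in\{0,1\}^K$ is its indicator vector; $\chi_K$ is the all-ones vector on $K$. For $E\subseteq K$ and $c\in C$, $\chi_{E,c}\in\mathbb N^{K\cup C}$ has $K$-components $\chi_E$ and $C$-components equal to the indicator of $c$. $PM(V)=\{\chi_{q,c}: c\in C,\ q\text{ a perfect matching of }B_c\}$. For $\mathcal M\subseteq\mathbb N^{K\cup C}$, $\mathbf N(\mathcal M)$ is the set of finite nonnegative integer combinations of elements of $\mathcal M$, and $\overline{\mathbf N}(\mathcal M)=\{v\in\mathbb N^{K\cup C}: kv\in\mathbf N(\mathcal M)\text{ for some integer }k\ge1\}$. For $v\in\mathbb N^{K\cup C}$, $E(v)=\{e\in K: v(e)=1\}$. $\mathrm{problem}(V)$ is the set of $v\in\mathbb N^{K\cup C}$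 such that $v|_K\le\chi_K$, the graph $(V,E(v))$ is regular, and $\frac{|V|}{2}\sum_{c\in C}v(c)=\sum_{e\in K}v(e)$. A regular graph $G=(V,E)$ is B-factorizable if every $v\in\overline{\mathbf N}(PM(V))$ with $v|_K=\chi_E$ belongs to $\mathbf N(PM(V))$. The monoid $\overline{\mathbf N}(PM(V))$ is pointed, hence has a unique inclusion-minimal generating set (as a monoid), its Hilbert basis. An additional generator is an element of the Hilbert basis of $\overline{\mathbf N}(PM(V))$ that does not belong to $PM(V)$. *)

From HB Require Import structures.
From mathcomp Require Import all_boot.
Set Implicit Arguments. Unset Strict Implicit. Unset Printing Implicit Defensive.

Section Defs.
Variable V : finType.

Definition K := {e : {set V} | #|e| == 2}.

(* C = equal partitions {H, A}, represented as the unordered pair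
   [set H; A] of subsets with A = ~: H and |H| = |A| = |V|/2 *)
Definition is_eqpart (P : {set {set V}}) : bool :=
  [exists H : {set V}, [&& #|H| == #|V| %/ 2, #|~: H| == #|V| %/ 2 &
                         P == [set H; ~: H]]].
Definition C := {P : {set {set V}} | is_eqpart P}.

Definition vec := {ffun (K + C)%type -> nat}.

Definition chiEc (E : {set K}) (c : C) : vec :=
  [ffun i => match i with inl e => nat_of_bool (e \in E)
                        | inr c' => nat_of_bool (c' == c) end].

Definition crosses (c : C) (e : K) : bool :=
  [forall H in val c, #|val e :&: H| == 1].
Definition perfect_matching_B (c : C) (q : {set K}) : bool :=
  [forall e in q, crosses c e] &&
  [forall x : V, #|[set e in q | x \in val e]| == 1].

Definition PM (v : vec) : Prop :=
  exists (c : C) (q : {set K}), perfect_matching_B c q /\ v = chiEc q c.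

Definition vsum (s : seq vec) : vec := [ffun i => \sum_(x <- s) x i].
Definition vscale (k : nat) (v : vec) : vec := [ffun i => k * v i].

Definition Ncomb (M : vec -> Prop) (v : vec) : Prop :=
  exists s : seq vec, (forall x, x \in s -> M x) /\ v = vsum s.

Definition Nbar (M : vec -> Prop) (v : vec) : Prop :=
  exists k : nat, 1 <= k /\ Ncomb M (vscale k v).

Definition Eof (v : vec) : {set K} := [set e | v (inl e) == 1].

Definition regular_graph (E : {set K}) : Prop :=
  exists d : nat, forall x : V, #|[set e in E | x \in val e]| = d.

Definition problem (v : vec) : Prop :=
  (forall e : K, v (inl e) <= 1) /\ regular_graph (Eof v) /\
  (#|V| %/ 2) * (\sum_(c : C) v (inr c)) = \sum_(e : K) v (inl e).

Definition B_factorizable (E : {set K}) : Prop :=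
  forall v : vec, Nbar PM v -> (forall e : K, v (inl e) = nat_of_bool (e \in E)) ->
    Ncomb PM v.

(* generating sets of a monoid Mon (given as a predicate), and the
   Hilbert basis = the (unique) inclusion-minimal generating set *)
Definition generating_set (Mon G : vec -> Prop) : Prop :=
  (forall x, G x -> Mon x) /\ (forall x, Mon x -> Ncomb G x).
Definition minimal_generating_set (Mon G : vec -> Prop) : Prop :=
  generating_set Mon G /\
  (forall G' : vec -> Prop, (forall x, G' x -> G x) -> generating_set Mon G' ->
     forall x, G x -> G' x).
Definition in_hilbert_basis (Mon : vec -> Prop) (v : vec) : Prop :=
  exists G : vec -> Prop, minimal_generating_set Mon G /\ G v.

Definition additional_generator (v : vec) : Prop :=
  in_hilbert_basis (Nbar PM) v /\ ~ PM v.

End Defs.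

(* The Petersen graph as the Kneser graph K(5,2): vertices are the
   2-subsets of {0,..,4}, adjacent iff disjoint. *)
Definition PV := {A : {set 'I_5} | #|A| == 2}.
Definition petersenE : {set K PV} :=
  [set e : K PV | [exists x : PV, exists y : PV,
     [&& x != y, [disjoint val x & val y] & val e == [set x; y]]]].

From mathcomp Require Import all_boot.
From Stdlib Require Import Classical_Prop.
Set Implicit Arguments. Unset Strict Implicit. Unset Printing Implicit Defensive.

(* Let v have edge part the indicator of P and cut part c1 + c2 + c3, for three
   equal partitions c1, c2, c3 of V.  The six perfect matchings of P can be paired
   so that each pair crosses one of the c_i, and every edge lies in exactly two of
   them; hence 2v is the sum of six elements of PM(V), and v lies in Nbar(PM(V)).

   The general part of the file shows that, when any two perfect matchings of a
   graph E share an edge, a nonzero v in Nbar(PM(V)) with edge part the indicator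
   of E cannot be split into two nonzero elements of Nbar(PM(V)) (each would carry
   a perfect matching of E in its support, and the supports are disjoint).  Such
   an irreducible v belongs to the Hilbert basis (the irreducibles are the minimal
   generating set), and if moreover v is not in PM(V) it is not in N(PM(V)),
   so E is not B-factorizable.  For P the hypothesis is checked by enumerating
   its perfect matchings on an explicit numbering of its vertices and edges; v is
   not in PM(V) because its cut part has three nonzero entries. *)

Section VectorMonoid.
Variable V : finType.
Implicit Types (x a b : vec V) (M : vec V -> Prop) (s : seq (vec V)).

Definition vzero : vec V := [ffun _ => 0].
Definition vadd a b : vec V := [ffun i => a i + b i].

Lemma vsum_nil : vsum [::] = vzero.
Proof. by apply/ffunP => i; rewrite !ffunE big_nil. Qed.

Lemma vsum_cons x s : vsum (x :: s) = vadd x (vsum s).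
Proof. by apply/ffunP => i; rewrite !ffunE big_cons. Qed.

Lemma vsum1 x : vsum [:: x] = x.
Proof. by apply/ffunP => i; rewrite !ffunE big_seq1. Qed.

Lemma vsum_cat s1 s2 : vsum (s1 ++ s2) = vadd (vsum s1) (vsum s2).
Proof. by apply/ffunP => i; rewrite !ffunE big_cat. Qed.

Lemma vadd_nonzero a b : a != vzero -> vadd a b != vzero.
Proof.
apply: contra => /eqP /ffunP ab0; apply/eqP/ffunP => i.
by have := ab0 i; rewrite !ffunE => /eqP; rewrite addn_eq0 => /andP [/eqP].
Qed.

Lemma Ncomb_gen M x : M x -> Ncomb M x.
Proof. by move=> Mx; exists [:: x]; rewrite vsum1; split=> // y /[!inE] /eqP ->. Qed.

Lemma Ncomb0 M : Ncomb M vzero.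
Proof. by exists [::]; rewrite vsum_nil. Qed.

Lemma Ncomb_add M a b : Ncomb M a -> Ncomb M b -> Ncomb M (vadd a b).
Proof.
case=> s1 [h1 ->] [s2 [h2 ->]]; exists (s1 ++ s2); rewrite vsum_cat.
by split=> // x /[!mem_cat] /orP [/h1|/h2].
Qed.

Lemma Ncomb_scale M k a : Ncomb M a -> Ncomb M (vscale k a).
Proof.
move=> Na; elim: k => [|k IH].
  have -> : vscale 0 a = vzero by apply/ffunP => i; rewrite !ffunE.
  exact: Ncomb0.
have -> : vscale k.+1 a = vadd a (vscale k a) by apply/ffunP => i; rewrite !ffunE mulSn.
exact: Ncomb_add.
Qed.

(* Nbar(M) contains M and is closed under addition (use the product of the
   two multipliers), hence under finite sums. *)
Lemma Nbar_gen M x : M x -> Nbar M x.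
Proof.
move=> Mx; exists 1; split=> //.
have -> : vscale 1 x = x by apply/ffunP => i; rewrite ffunE mul1n.
exact: Ncomb_gen.
Qed.

Lemma Nbar_add M a b : Nbar M a -> Nbar M b -> Nbar M (vadd a b).
Proof.
case=> k1 [k1_gt0 Na] [k2 [k2_gt0 Nb]]; exists (k1 * k2); rewrite muln_gt0 k1_gt0.
split=> //.
have -> : vscale (k1 * k2) (vadd a b) =
          vadd (vscale k2 (vscale k1 a)) (vscale k1 (vscale k2 b)).
  by apply/ffunP => i; rewrite !ffunE mulnDr mulnA [k2 * k1]mulnC mulnA.
by apply: Ncomb_add; apply: Ncomb_scale.
Qed.

Lemma Nbar_vsum M s : (forall x, x \in s -> Nbar M x) -> Nbar M (vsum s).
Proof.
elim: s => [|x s IH] Ns.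
  rewrite vsum_nil; exists 1; split=> //.
  have -> : vscale 1 vzero = vzero by apply/ffunP => i; rewrite !ffunE.
  exact: Ncomb0.
rewrite vsum_cons; apply: Nbar_add; first by apply: Ns; rewrite mem_head.
by apply: IH => y sy; apply: Ns; rewrite inE sy orbT.
Qed.

(* The total weight of a vector: it decreases strictly along a splitting into two
   nonzero vectors, which makes decomposition into irreducibles terminate. *)
Definition weight x := \sum_i x i.

Lemma weight_add a b : weight (vadd a b) = weight a + weight b.
Proof. by rewrite /weight -big_split; apply: eq_bigr => i _; rewrite ffunE. Qed.

Lemma weight_gt0 x : x != vzero -> 0 < weight x.
Proof.
apply: contraR; rewrite -leqNgt leqn0 sum_nat_eq0 => /forallP x0.
by apply/eqP/ffunP => i; rewrite ffunE; apply/eqP; have := x0 i.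
Qed.

End VectorMonoid.

Section Irreducible.
Variables (V : finType) (M : vec V -> Prop).
Implicit Types (x y : vec V) (G : vec V -> Prop).

Definition reducible x : Prop :=
  exists a b, [/\ Nbar M a, Nbar M b, a != vzero V, b != vzero V & x = vadd a b].

Definition irreducible x : Prop := [/\ Nbar M x, x != vzero V & ~ reducible x].

Lemma irreducibles_generate x : Nbar M x -> Ncomb irreducible x.
Proof.
move: {2}(weight x) (leqnn (weight x)) => n; elim: n x => [|n IH] x wx Nx.
  case: (eqVneq x (vzero V)) => [->|nz]; first exact: Ncomb0.
  by move: wx; rewrite leqn0 => /eqP wx0; move: (weight_gt0 nz); rewrite wx0.
case: (eqVneq x (vzero V)) => [->|nz]; first exact: Ncomb0.
case: (classic (reducible x)) => [[a [b [Na Nb nza nzb xab]]] | irr]; last first.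
  exact: Ncomb_gen.
rewrite xab; move: wx; rewrite xab weight_add => wab.
have wa := weight_gt0 nza; have wb := weight_gt0 nzb.
apply: Ncomb_add; apply: IH => //; rewrite -ltnS; apply: leq_trans wab.
  by rewrite -addn1 leq_add2l.
by rewrite -add1n leq_add2r.
Qed.

Lemma irreducible_Ncomb G x : (forall y, G y -> Nbar M y /\ y != vzero V) ->
  irreducible x -> Ncomb G x -> G x.
Proof.
move=> GN [_ nz irr] [[|y [|z t]] [Gs xs]]; subst x.
- by rewrite vsum_nil eqxx in nz.
- by rewrite vsum1; apply: Gs; rewrite mem_head.
- have [Ny nzy] := GN y (Gs y (mem_head _ _)).
  have [_ nzz] : Nbar M z /\ z != vzero V by apply/GN/Gs; rewrite !inE eqxx orbT.
  exfalso; apply: irr; exists y, (vsum (z :: t)); split=> //.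
  + by apply: Nbar_vsum => w tw; apply: (GN w (Gs w _)).1; rewrite inE tw orbT.
  + by rewrite vsum_cons; exact: vadd_nonzero.
  + by rewrite vsum_cons.
Qed.

Lemma irreducible_hilbert x : irreducible x -> in_hilbert_basis (Nbar M) x.
Proof.
move=> irr_x; exists irreducible; split=> //; split.
  by split=> [y []|y]; last exact: irreducibles_generate.
move=> G' G'irr [_ gen] y irr_y; apply: irreducible_Ncomb (gen y _) => //.
  by move=> z /G'irr [].
by case: irr_y.
Qed.

End Irreducible.

Section MatchingVectors.
Variable V : finType.
Implicit Types (x y : vec V) (E q : {set K V}).

Definition graph_matching E q : bool :=
  (q \subset E) && [forall v : V, #|[set e in q | v \in val e]| == 1].

Lemma PM_nonzero x : PM x -> x != vzero V.
Proof.
by case=> c [q [_ ->]]; apply/eqP => /ffunP /(_ (inr c)); rewrite !ffunE eqxx.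
Qed.

(* The edge support of a nonzero element of Nbar PM contains a perfect matching
   of some B_c: namely that of any summand of a multiple of it. *)
Lemma Nbar_PM_support y : Nbar (@PM V) y -> y != vzero V ->
  exists c q, perfect_matching_B c q /\ forall e, e \in q -> 0 < y (inl e).
Proof.
case=> k [k_gt0 [[|x s] [PMs ky]]] nz.
  move/negP: nz; case; apply/eqP/ffunP => i.
  move: ky => /ffunP /(_ i); rewrite !ffunE big_nil => /eqP.
  by rewrite muln_eq0 eqn0Ngt k_gt0 => /eqP.
have [c [q [pm_q xcq]]] : PM x by apply: PMs; rewrite mem_head.
exists c, q; split=> // e qe; move: ky => /ffunP /(_ (inl e)).
rewrite vsum_cons xcq !ffunE qe lt0n => ky.
by apply/eqP => y0; rewrite y0 muln0 in ky.
Qed.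

(* If any two perfect matchings of (V, E) share an edge, then every nonzero
   element of Nbar PM whose edge part is the indicator of E is irreducible:
   the supports of two summands would contain disjoint perfect matchings. *)
Lemma irreducible_if_matchings_meet E y :
  (forall q1 q2, graph_matching E q1 -> graph_matching E q2 -> ~~ [disjoint q1 & q2]) ->
  Nbar (@PM V) y -> y != vzero V -> (forall e, y (inl e) = (e \in E)) ->
  irreducible (@PM V) y.
Proof.
move=> meet Ny nz yE; split=> // [[a [b [Na Nb nza nzb yab]]]].
have yab_e e : a (inl e) + b (inl e) = (e \in E) by rewrite -yE yab ffunE.
have [ca [qa [pm_a supp_a]]] := Nbar_PM_support Na nza.
have [cb [qb [pm_b supp_b]]] := Nbar_PM_support Nb nzb.
have in_E e : 0 < a (inl e) + b (inl e) -> e \in E by rewrite yab_e lt0b.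
have matching_of c q (z : vec V) : perfect_matching_B c q ->
    (forall e, e \in q -> 0 < z (inl e)) ->
    (forall e, z (inl e) <= a (inl e) + b (inl e)) -> graph_matching E q.
  move=> /andP [_ deg] supp zle; rewrite /graph_matching deg andbT.
  by apply/subsetP => e qe; apply: in_E; exact: leq_trans (supp e qe) (zle e).
have /negP := meet qa qb (matching_of _ _ _ pm_a supp_a (fun e => leq_addr _ _))
                        (matching_of _ _ _ pm_b supp_b (fun e => leq_addl _ _)).
apply; rewrite disjoints_subset; apply/subsetP => e qae; rewrite inE.
apply/negP => qbe; have := leq_add (supp_a e qae) (supp_b e qbe).
by rewrite yab_e; case: (e \in E).
Qed.

Lemma not_B_factorizable E y : (forall e, y (inl e) = (e \in E)) ->
  irreducible (@PM V) y -> ~ PM y -> ~ B_factorizable E.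
Proof.
move=> yE irr_y notPM BE; apply/notPM/(irreducible_Ncomb _ irr_y).
  by move=> z PMz; split; [exact: Nbar_gen | exact: PM_nonzero].
by apply: BE; [case: irr_y | exact: yE].
Qed.

End MatchingVectors.

Section FinsetFacts.
Variable T : finType.
Implicit Types (s : seq T) (A : {set T}).

Lemma card_seqset s : uniq s -> #|[set:: s]| = size s.
Proof. by move=> us; rewrite cardsE; move/card_uniqP: us. Qed.

Lemma card_seqset_filter s (P : pred T) : uniq s ->
  #|[set x in [set:: s] | P x]| = count P s.
Proof.
move=> us; rewrite -size_filter -card_seqset ?filter_uniq //.
by congr #|pred_of_set _|; apply/setP => x; rewrite !inE mem_filter andbC.
Qed.

Lemma cards2I (x y : T) A : x != y -> #|[set x; y] :&: A| = (x \in A) + (y \in A).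
Proof.
move=> xy; have -> : [set x; y] :&: A = [set z in [set:: [:: x; y]] | z \in A].
  by apply/setP => z; rewrite !inE.
by rewrite card_seqset_filter /= ?addn0 ?inE ?andbT.
Qed.

Lemma set2_eq (a b c d : T) : a != b ->
  ([set a; b] == [set c; d]) = ((a == c) && (b == d)) || ((a == d) && (b == c)).
Proof.
move=> ab; apply/eqP/idP => [eq_ab | /orP [] /andP [/eqP <- /eqP <-] //]; last first.
  by rewrite setUC.
have /set2P [ac|ad] : a \in [set c; d] by rewrite -eq_ab set21.
all: have /set2P [bc|bd] : b \in [set c; d] by rewrite -eq_ab set22.
- by rewrite ac bc eqxx in ab.
- by rewrite ac bd !eqxx.
- by rewrite ad bc !eqxx orbT.
- by rewrite ad bd eqxx in ab.
Qed.

Lemma disjoint_set2 (i j : T) A : [disjoint [set i; j] & A] = (i \notin A) && (j \notin A).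
Proof. by rewrite disjoints_subset subUset !sub1set !inE. Qed.

Lemma sep_subset (P : pred T) (A B : {set T}) : A \subset B ->
  [set x in A | P x] = [set x in [set x in B | P x] | x \in A].
Proof.
move=> AB; apply/setP => x; rewrite !inE.
by case xA: (x \in A); rewrite ?andbF ?andbT // (subsetP AB x xA).
Qed.

Lemma sum_count_mem s : \sum_(x : T) count_mem x s = size s.
Proof.
elim: s => [|y s IH] /=; first by rewrite big1.
rewrite big_split /= IH (bigD1 y) //= eqxx big1 // => x /negbTE.
by rewrite eq_sym => ->.
Qed.

Lemma sum_in_card A : \sum_(x : T) (x \in A : nat) = #|A|.
Proof. by rewrite -sum1_card [RHS]big_mkcond; apply: eq_bigr => x _; case: (x \in A). Qed.

End FinsetFacts.

Lemma sum_count (T : Type) (s : seq T) (a : pred T) : \sum_(x <- s) (a x : nat) = count a s.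
Proof. by elim: s => [|x s IH]; rewrite ?big_nil ?big_cons ?IH. Qed.

(* A numbering of the Petersen graph.  The ten vertices {i, j} of PV (i < j < 5)
   are numbered 0..9 in lexicographic order; pv a is vertex number a. *)
Definition vertex_pairs : seq (nat * nat) :=
  [:: (0,1); (0,2); (0,3); (0,4); (1,2); (1,3); (1,4); (2,3); (2,4); (3,4)].

Definition o5 (i : nat) : 'I_5 := Ordinal (ltn_pmod i (isT : 0 < 5)).

Lemma o5_val (i : 'I_5) : o5 i = i.
Proof. by apply: val_inj; rewrite /= modn_small. Qed.

Definition pvset (a : nat) : {set 'I_5} :=
  [set o5 (nth (0,1) vertex_pairs a).1; o5 (nth (0,1) vertex_pairs a).2].

Lemma pvsetP a : #|pvset a| == 2.
Proof. by rewrite /pvset cards2; do 10?[case: a => [|a]] => //=; rewrite nth_nil. Qed.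

Definition pv (a : nat) : PV := exist _ (pvset a) (pvsetP a).

Lemma pv_eq a b : a < 10 -> b < 10 -> (pv a == pv b) = (a == b).
Proof.
rewrite -[pv a == _]/(pvset a == pvset b) /pvset.
by do 10?[case: a => [|a]] => //= _; do 10?[case: b => [|b]] => //= _; rewrite set2_eq.
Qed.

Lemma pv_surj (x : PV) : exists2 a, a < 10 & x = pv a.
Proof.
case: x => A A2; have /cards2P [i [j [ij defA]]] := A2; subst A.
suff [a a_lt10 defA] : exists2 a, a < 10 & [set i; j] = pvset a.
  by exists a => //; apply: val_inj.
clear A2; rewrite -(o5_val i) -(o5_val j) in ij *; case: i j ij => [i i5] [j j5] /= ij.
exists (index (minn i j, maxn i j) vertex_pairs).
  by do 5?[case: i i5 ij => [|i] i5 ij] => //; do 5?[case: j j5 ij => [|j] j5 ij].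
by do 5?[case: i i5 ij => [|i] i5 ij] => //; do 5?[case: j j5 ij => [|j] j5 ij] => //;
   rewrite /pvset /=; first [reflexivity | apply: setUC].
Qed.

Definition vertex_indices (h : seq nat) : bool := all (fun a => a < 10) h.

Lemma uniq_pv h : vertex_indices h -> uniq h -> uniq (map pv h).
Proof.
move=> /allP h10 uh; rewrite map_inj_in_uniq // => a b ah bh /eqP.
by rewrite pv_eq ?(h10 _ ah) ?(h10 _ bh) // => /eqP.
Qed.

Lemma card_PV : #|{: PV}| = 10.
Proof.
rewrite -cardsT (_ : [set: PV] = [set:: map pv (iota 0 10)]).
  by rewrite card_seqset ?size_map ?uniq_pv ?iota_uniq.
apply/setP => x; rewrite in_setT in_set; have [a a10 ->] := pv_surj x.
by rewrite map_f // mem_iota.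
Qed.

(* The fifteen edges, as pairs (a, b) of vertex numbers with a < b; ep m is edge
   number m. *)
Definition edge_pairs : seq (nat * nat) :=
  [:: (0, 7); (0, 8); (0, 9); (1, 5); (1, 6); (1, 9); (2, 4); (2, 6);
      (2, 8); (3, 4); (3, 5); (3, 7); (4, 9); (5, 8); (6, 7)].

Definition ends (m : nat) : nat * nat := nth (0, 1) edge_pairs m.

Lemma endsP m : (ends m).1 < (ends m).2 < 10.
Proof. by rewrite /ends; do 15?[case: m => [|m]] => //=; rewrite nth_nil. Qed.

Lemma pv_disjoint a b : a < 10 -> b < 10 ->
  [disjoint val (pv a) & val (pv b)] = ((minn a b, maxn a b) \in edge_pairs).
Proof.
rewrite /= /pvset disjoint_set2 !in_set2.
by do 10?[case: a => [|a]] => //= _; do 10?[case: b => [|b]].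
Qed.

Lemma epP m : #|[set pv (ends m).1; pv (ends m).2]| == 2.
Proof.
have /andP [lt12 lt2] := endsP m.
by rewrite cards2 pv_eq ?(ltn_trans lt12) // neq_ltn lt12.
Qed.

Definition ep (m : nat) : K PV := exist (fun e : {set PV} => #|e| == 2) _ (epP m).

Lemma ep_eq m n : m < 15 -> n < 15 -> (ep m == ep n) = (m == n).
Proof.
move=> m15 n15; have /andP [ltm m10] := endsP m; have /andP [ltn n10] := endsP n.
rewrite -[ep m == _]/([set pv _; pv _] == [set pv _; pv _]).
rewrite set2_eq ?pv_eq ?(ltn_trans ltm) ?(ltn_trans ltn) ?neq_ltn ?ltm //.
have no_swap : ((ends m).1 == (ends n).2) && ((ends m).2 == (ends n).1) = false.
  apply/negbTE/andP => [[/eqP e1 /eqP e2]].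
  by move: ltn; rewrite -e2 -e1 ltnNge (ltnW ltm).
have -> : (m == n) = (ends m == ends n) by rewrite nth_uniq.
by rewrite no_swap orbF; case: (ends m) => ? ?; case: (ends n).
Qed.

Lemma in_ep a m : a < 10 -> (pv a \in val (ep m)) = (a == (ends m).1) || (a == (ends m).2).
Proof.
have /andP [lt12 lt2] := endsP m.
by move=> a10; rewrite in_set2 !pv_eq ?(ltn_trans lt12).
Qed.

Lemma ep_in_E m : m < 15 -> ep m \in petersenE.
Proof.
move=> m15; have /andP [lt12 lt2] := endsP m; have lt1 := ltn_trans lt12 lt2.
rewrite inE; apply/existsP; exists (pv (ends m).1); apply/existsP; exists (pv (ends m).2).
rewrite pv_eq // neq_ltn lt12 pv_disjoint // eqxx andbT.
by rewrite /minn /maxn lt12 -surjective_pairing mem_nth.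
Qed.

Lemma E_ep e : e \in petersenE -> exists2 m, m < 15 & e = ep m.
Proof.
rewrite inE => /existsP [x /existsP [y /and3P [xy dis /eqP eval]]].
have [a a10 defx] := pv_surj x; have [b b10 defy] := pv_surj y; subst x y.
rewrite pv_disjoint // in dis.
set m := index (minn a b, maxn a b) edge_pairs.
have endsm : ends m = (minn a b, maxn a b) by rewrite /ends nth_index.
exists m; first by rewrite -index_mem in dis.
apply: val_inj; rewrite eval /= endsm.
by case: leqP; rewrite // setUC.
Qed.

(* The set of edges with indices in l; subgraphs are handled through such lists. *)
Definition edges_of (l : seq nat) : {set K PV} := [set:: map ep l].

Lemma edges_ofE e l : (e \in edges_of l) = (e \in map ep l).
Proof. exact: in_set. Qed.

Definition edge_indices (l : seq nat) : bool := all (fun m => m < 15) l.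

Lemma mem_edges_of m l : m < 15 -> edge_indices l -> (ep m \in edges_of l) = (m \in l).
Proof.
move=> m15 /allP l15; rewrite edges_ofE; apply/mapP/idP => [[n nl /eqP] | ml].
  by rewrite ep_eq ?(l15 _ nl) // => /eqP ->.
by exists m.
Qed.

Lemma petersen_edges : petersenE = edges_of (iota 0 15).
Proof.
apply/setP => e; rewrite edges_ofE; apply/idP/mapP => [/E_ep [m m15 ->] | [m]].
  by exists m; rewrite ?mem_iota.
by rewrite mem_iota => m15 ->; exact: ep_in_E.
Qed.

Lemma edges_of_sub l : edge_indices l -> edges_of l \subset petersenE.
Proof.
move=> l15; apply/subsetP => e; rewrite petersen_edges !edges_ofE => /mapP [m ml ->].
by rewrite map_f // mem_iota (allP l15).
Qed.

Lemma uniq_edges_of l : edge_indices l -> uniq l -> uniq (map ep l).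
Proof.
move=> /allP l15 ul; rewrite map_inj_in_uniq // => m n ml nl.
by move/eqP; rewrite ep_eq ?(l15 _ ml) ?(l15 _ nl) // => /eqP.
Qed.

Lemma card_edges_of l : edge_indices l -> uniq l -> #|edges_of l| = size l.
Proof. by move=> l15 ul; rewrite card_seqset ?size_map ?uniq_edges_of. Qed.

Lemma card_petersenE : #|petersenE| = 15.
Proof. by rewrite petersen_edges card_edges_of ?iota_uniq. Qed.

Definition star (a : nat) : seq nat :=
  [seq m <- iota 0 15 | (a == (ends m).1) || (a == (ends m).2)].

Lemma star_indices a : edge_indices (star a).
Proof. by apply/allP => m; rewrite mem_filter mem_iota => /andP []. Qed.

Lemma petersen_star a : a < 10 ->
  [set e in petersenE | pv a \in val e] = edges_of (star a).
Proof.
move=> a10; apply/setP => e; rewrite edges_ofE in_set.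
apply/andP/mapP => [[/E_ep [m m15 ->] am] | [m]].
  by exists m; rewrite // mem_filter mem_iota -in_ep // am.
rewrite mem_filter mem_iota /= => /andP [am m15] ->.
by rewrite ep_in_E // in_ep.
Qed.

Lemma petersen_degree (q : {set K PV}) a : q \subset petersenE -> a < 10 ->
  #|[set e in q | pv a \in val e]| = count (fun m => ep m \in q) (star a).
Proof.
move=> qE a10; rewrite (sep_subset _ qE) petersen_star // card_seqset_filter ?count_map //.
by rewrite uniq_edges_of ?star_indices ?filter_uniq ?iota_uniq.
Qed.

Lemma petersen_regular : regular_graph petersenE.
Proof.
exists 3 => x; have [a a10 ->] := pv_surj x.
rewrite petersen_star // card_edges_of ?star_indices ?filter_uniq ?iota_uniq //.
by move: a a10; do 10?[case=> //].
Qed.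

(* All sublists of s, keeping or dropping each element: the search space for the
   enumeration of perfect matchings. *)
Fixpoint sublists (s : seq nat) : seq (seq nat) :=
  if s is x :: s' then [seq x :: l | l <- sublists s'] ++ sublists s' else [:: [::]].

Lemma filter_sublists (p : pred nat) s : filter p s \in sublists s.
Proof.
elim: s => [|x s IH] //=; rewrite mem_cat.
by case: (p x); rewrite ?map_f ?IH ?orbT.
Qed.

(* The stars, tabulated so that the enumeration below is fast to evaluate. *)
Definition petersen_stars : seq (seq nat) :=
  [:: [:: 0; 1; 2]; [:: 3; 4; 5]; [:: 6; 7; 8]; [:: 9; 10; 11]; [:: 6; 9; 12];
      [:: 3; 10; 13]; [:: 4; 7; 14]; [:: 0; 11; 14]; [:: 1; 8; 13]; [:: 2; 5; 12]].

Lemma petersen_starsE : map star (iota 0 10) = petersen_stars.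
Proof. by []. Qed.

Definition perfect_indices (l : seq nat) : bool :=
  all (fun st => count (mem l) st == 1) petersen_stars.

Definition petersen_pms : seq (seq nat) :=
  [:: [:: 0; 4; 8; 10; 12]; [:: 0; 5; 7; 9; 13]; [:: 1; 3; 7; 11; 12];
      [:: 1; 5; 6; 10; 14]; [:: 2; 3; 8; 9; 14]; [:: 2; 4; 6; 11; 13]].

Lemma petersen_pms_indices : all edge_indices petersen_pms.
Proof. by []. Qed.

(* The Petersen graph has exactly six perfect matchings ... *)
Lemma petersen_pmsE : [seq l <- sublists (iota 0 15) | perfect_indices l] = petersen_pms.
Proof. by vm_compute. Qed.

(* ... and any two of them share an edge. *)
Lemma petersen_pms_meet : all (fun l1 => all (has (mem l1)) petersen_pms) petersen_pms.
Proof. by []. Qed.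

Definition indices (q : {set K PV}) : seq nat := [seq m <- iota 0 15 | ep m \in q].

Lemma matching_indices q : graph_matching petersenE q -> indices q \in petersen_pms.
Proof.
case/andP => qE /forallP deg; rewrite -petersen_pmsE mem_filter filter_sublists andbT.
rewrite /perfect_indices -petersen_starsE all_map; apply/allP => a; rewrite mem_iota => a10.
rewrite /= -(eqP (deg (pv a))) petersen_degree //; apply/eqP/eq_in_count => m.
by move/(allP (star_indices a)) => m15; rewrite [mem _ m]mem_filter mem_iota leq0n add0n m15 !andbT.
Qed.

Lemma petersen_matchings_meet q1 q2 :
  graph_matching petersenE q1 -> graph_matching petersenE q2 -> ~~ [disjoint q1 & q2].
Proof.
move=> /matching_indices pm1 /matching_indices pm2.
have /hasP [m] := allP (allP petersen_pms_meet _ pm1) _ pm2.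
rewrite mem_filter => /andP [q2m _]; rewrite [mem _ m]mem_filter => /andP [q1m _].
by rewrite disjoints_subset; apply/negP => /subsetP /(_ _ q1m); rewrite inE q2m.
Qed.

Definition side (h : seq nat) : {set PV} := [set:: map pv h].

Lemma mem_side a h : a < 10 -> vertex_indices h -> (pv a \in side h) = (a \in h).
Proof.
move=> a10 /allP h10; rewrite in_set; apply/mapP/idP => [[b bh /eqP] | ah].
  by rewrite pv_eq ?(h10 _ bh) // => /eqP ->.
by exists a.
Qed.

Lemma side_eqpart h : vertex_indices h -> uniq h -> size h = 5 ->
  is_eqpart [set side h; ~: side h].
Proof.
move=> h10 uh h5; apply/existsP; exists (side h); rewrite eqxx card_PV andbT.
have card_side : #|side h| = 5 by rewrite card_seqset ?size_map ?uniq_pv.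
by rewrite card_side cardsCs setCK card_PV card_side.
Qed.

Definition cut (h : seq nat) (hP : is_eqpart [set side h; ~: side h]) : C PV :=
  exist (@is_eqpart PV) _ hP.

Definition crosses_indices (h : seq nat) (m : nat) : bool :=
  ((ends m).1 \in h) + ((ends m).2 \in h) == 1.

Lemma crosses_cut h (hP : is_eqpart [set side h; ~: side h]) m : vertex_indices h ->
  crosses (cut hP) (ep m) = crosses_indices h m.
Proof.
move=> h10; have /andP [lt12 lt2] := endsP m; have lt1 := ltn_trans lt12 lt2.
have e12 : pv (ends m).1 != pv (ends m).2 by rewrite pv_eq // neq_ltn lt12.
rewrite /crosses_indices; apply/forall_inP/idP => [cross | cr H /set2P [->|->]].
- by have := cross _ (set21 _ _); rewrite cards2I // !mem_side.
- by rewrite cards2I // !mem_side.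
- by rewrite cards2I // !in_setC !mem_side //; move: cr; do 2!case: (_ \in h).
Qed.

Lemma cut_matching h (hP : is_eqpart [set side h; ~: side h]) l :
  vertex_indices h -> l \in petersen_pms -> all (crosses_indices h) l ->
  perfect_matching_B (cut hP) (edges_of l).
Proof.
move=> h10 lpm /allP cr; have l15 := allP petersen_pms_indices l lpm.
apply/andP; split.
  apply/forall_inP => e; rewrite edges_ofE => /mapP [m ml ->].
  by rewrite crosses_cut // cr.
apply/forallP => x; have [a a10 ->] := pv_surj x.
have lE := edges_of_sub l15.
have : perfect_indices l by move: lpm; rewrite -petersen_pmsE mem_filter => /andP [].
rewrite /perfect_indices -petersen_starsE all_map => /allP /(_ a).
rewrite mem_iota add0n a10 petersen_degree //.
suff -> : count (fun m => ep m \in edges_of l) (star a) = count (mem l) (star a).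
  by move/(_ isT).
by apply: eq_in_count => m /(allP (star_indices a)) m15; rewrite /= mem_edges_of.
Qed.

(* Three equal partitions; the matchings of petersen_pms cross them in pairs. *)
Definition half1 : seq nat := [:: 0; 1; 2; 4; 5].
Definition half2 : seq nat := [:: 0; 1; 3; 4; 6].
Definition half3 : seq nat := [:: 0; 1; 4; 7; 8].
Definition c1 : C PV := cut (@side_eqpart half1 isT isT erefl).
Definition c2 : C PV := cut (@side_eqpart half2 isT isT erefl).
Definition c3 : C PV := cut (@side_eqpart half3 isT isT erefl).

(* c1 and c2 differ: vertex 2 is on side half1 of c1 but on neither side of c2,
   which both contain vertex 0. *)
Lemma c1_neq_c2 : c1 != c2.
Proof.
apply/eqP => /(congr1 val) c12.
have : side half1 \in val c1 by rewrite /= set21.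
rewrite c12 => /set2P [e|e].
- have : pv 2 \in side half1 by rewrite mem_side.
  by rewrite e mem_side.
- have : pv 0 \in side half1 by rewrite mem_side.
  by rewrite e in_setC mem_side.
Qed.

Definition petersen_vec : vec PV :=
  [ffun i => match i with
             | inl e => nat_of_bool (e \in petersenE)
             | inr c => count_mem c [:: c1; c2; c3]
             end].

Lemma petersen_vec_edges e : petersen_vec (inl e) = (e \in petersenE).
Proof. by rewrite ffunE. Qed.

Lemma Eof_petersen_vec : Eof petersen_vec = petersenE.
Proof. by apply/setP => e; rewrite inE petersen_vec_edges; case: (e \in petersenE). Qed.

Definition matching_terms : seq (vec PV) :=
  [seq chiEc (edges_of p.1) p.2 | p <- zip petersen_pms [:: c1; c1; c2; c2; c3; c3]].

Lemma matching_terms_PM x : x \in matching_terms -> PM x.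
Proof.
case/mapP => [[l c] /= lc ->]; exists c, (edges_of l); split=> //.
move: lc; rewrite /= !inE.
by do ?case/orP; move=> /eqP [-> ->]; apply: cut_matching.
Qed.

Lemma petersen_pms_cover :
  all (fun m => count (fun l => m \in l) petersen_pms == 2) (iota 0 15).
Proof. by []. Qed.

Lemma twice_petersen_vec : vscale 2 petersen_vec = vsum matching_terms.
Proof.
apply/ffunP => [[e|c]]; rewrite !ffunE big_map.
- under eq_bigr do rewrite ffunE.
  rewrite -(big_map fst xpredT (fun l => nat_of_bool (e \in edges_of l))).
  rewrite (_ : map fst _ = petersen_pms) // sum_count; case eE: (e \in petersenE).
  + have [m m15 ->] := E_ep eE.
    rewrite (@eq_in_count _ _ (fun l : seq nat => m \in l)); last first.
      by move=> l /(allP petersen_pms_indices) l15; rewrite /= mem_edges_of.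
    by apply/esym/eqP/(allP petersen_pms_cover); rewrite mem_iota.
  + apply/esym/eqP; rewrite -leqn0 leqNgt -has_count; apply/hasPn => l lpm.
    apply: contraFN eE => /(subsetP (edges_of_sub _)); apply.
    exact: (allP petersen_pms_indices).
- under eq_bigr do rewrite ffunE.
  rewrite -(big_map snd xpredT (fun d => nat_of_bool (c == d))) sum_count /=.
  by rewrite !(eq_sym c); case: (c1 == c); case: (c2 == c); case: (c3 == c).
Qed.

(* v is in problem(V): 3-regular support, and (10 / 2) * 3 = 15 = #|P|. *)
Lemma petersen_vec_problem : problem petersen_vec.
Proof.
split; first by move=> e; rewrite petersen_vec_edges leq_b1.
split; first by rewrite Eof_petersen_vec; exact: petersen_regular.
under eq_bigr do rewrite ffunE; rewrite sum_count_mem card_PV.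
by under eq_bigr do rewrite ffunE; rewrite sum_in_card card_petersenE.
Qed.

Lemma petersen_vec_nonzero : petersen_vec != vzero PV.
Proof. by apply/eqP => /ffunP /(_ (inr c1)); rewrite !ffunE /= eqxx. Qed.

(* v is not a single perfect matching: it has three cuts in its support. *)
Lemma petersen_vec_notPM : ~ PM petersen_vec.
Proof.
case=> c [q [_ /ffunP v_eq]].
have at_cut d : d \in [:: c1; c2; c3] -> d = c.
  rewrite -has_pred1 has_count; move: (v_eq (inr d)); rewrite !ffunE => ->.
  by case: eqP.
have c1c := at_cut c1 (mem_head _ _).
have c2c : c2 = c by apply: at_cut; rewrite in_cons mem_head orbT.
by move: c1_neq_c2; rewrite c1c c2c eqxx.
Qed.

Theorem mainTheorem13 :
  ~ B_factorizable petersenE /\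
  exists v : vec PV,
    [/\ Nbar (@PM PV) v, problem v, Eof v = petersenE,
        Ncomb (@PM PV) (vscale 2 v) & additional_generator v].
Proof.
have twice_v : Ncomb (@PM PV) (vscale 2 petersen_vec).
  by exists matching_terms; split; [exact: matching_terms_PM | exact: twice_petersen_vec].
have Nbar_v : Nbar (@PM PV) petersen_vec by exists 2.
have irr_v : irreducible (@PM PV) petersen_vec.
  exact: irreducible_if_matchings_meet petersen_matchings_meet Nbar_v
           petersen_vec_nonzero petersen_vec_edges.
split; first exact: not_B_factorizable petersen_vec_edges irr_v petersen_vec_notPM.
exists petersen_vec; split=> //.
- exact: petersen_vec_problem.
- exact: Eof_petersen_vec.
- by split; [exact: irreducible_hilbert | exact: petersen_vec_notPM].
Qed.
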